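(* The category $\mathbf{T_D Top}$ of $T_D$-spaces and continuous maps is a full coreflective subcategory of the category $\mathbf{Top_{LC}}$ of topological spaces and locally closed maps. For each space $X$, the coreflection is the inclusion $X_D\subseteq X$, where $X_D$ is the subspace of locally closed points of $X$: for every $T_D$-space $Y$ and locally closed map $f:Y\to X$ there is a unique locally closed (continuous) map $\widehat f:Y\to X_D$ whose composite with the inclusion is $f$.
   Context: A point $x$ of a space $X$ is locally closed if $\{x\}$ is closed in some open neighborhood of $x$. $X$ is a $T_D$-space if every point is locally closed. A continuous map is locally closed if it maps locally closed points to locally closed points (every continuous map between $T_D$-spaces is locally closed). *)

From HB Require Import structures.
From mathcomp Require Import all_boot all_classical all_reals all_analysis.
Set Implicit Arguments. Unset Strict Implicit. Unset Printing Implicit Defensive.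
Local Open Scope classical_set_scope.

(* x is locally closed: {x} is closed in some open neighbourhood U of x,
   i.e. {x} = U ∩ C for some closed C of X (subspace topology on U). *)
Definition lc_point (X : topologicalType) (x : X) : Prop :=
  exists U : set X, [/\ open U, U x &
    exists C : set X, closed C /\ [set x] = U `&` C].

Definition TD_space (X : topologicalType) : Prop := forall x : X, lc_point x.

Definition lc_map (X Y : topologicalType) (f : X -> Y) : Prop :=
  forall x : X, lc_point x -> lc_point (f x).

Definition lc_points (X : topologicalType) : set X := [set x | lc_point x].

Definition XD (X : topologicalType) : topologicalType :=
  initial_topology (@set_val X (@lc_points X)).

Definition XD_incl (X : topologicalType) : XD X -> X := @set_val X (@lc_points X).
Arguments lc_points : clear implicits.
Arguments XD_incl : clear implicits.

From HB Require Import structures.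
From mathcomp Require Import all_boot all_classical all_reals all_analysis.
Set Implicit Arguments. Unset Strict Implicit. Unset Printing Implicit Defensive.
Local Open Scope classical_set_scope.

(* Local closedness of points is reflected by continuous injections, so the
   points of X_D, being locally closed in X, are locally closed in X_D; and a
   locally closed map out of a T_D-space lands in lc_points X, hence
   corestricts (uniquely, the inclusion being injective) to X_D. *)

Lemma lc_map_TD (Y Z : topologicalType) (f : Y -> Z) :
  TD_space Z -> lc_map f.
Proof. by move=> TZ y _; apply: TZ. Qed.

Lemma lc_point_continuous_inj (Y Z : topologicalType) (f : Y -> Z) (y : Y) :
  continuous f -> injective f -> lc_point (f y) -> lc_point y.
Proof.
move=> cf injf [U [oU Uy [C [cC def_fy]]]].
exists (f @^-1` U); split => //; first exact: open_comp.
exists (f @^-1` C); split; first exact: preimage_closed.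
apply/seteqP; split => z /=.
  by move=> ->; have : [set f y] (f y) by []; rewrite def_fy.
by move=> UCz; apply: injf; have : (U `&` C) (f z) by []; rewrite -def_fy.
Qed.

Lemma XD_incl_continuous (X : topologicalType) : continuous (XD_incl X).
Proof. exact: initial_continuous. Qed.

Lemma lc_point_XD_incl (X : topologicalType) (x : XD X) :
  lc_point (XD_incl X x).
Proof. exact: set_valP x. Qed.

Lemma XD_incl_inj (X : topologicalType) : injective (XD_incl X).
Proof. by move=> a b; apply: val_inj. Qed.

Lemma XD_TD_space (X : topologicalType) : TD_space (XD X).
Proof.
move=> x; exact: lc_point_continuous_inj (@XD_incl_continuous X) (@XD_incl_inj X)
                                      (lc_point_XD_incl x).
Qed.

Section Corestriction.
Variables (X Y : topologicalType) (f : Y -> X).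
Hypothesis f_lc : forall y, lc_point (f y).

Definition XD_corestr (y : Y) : XD X := exist _ (f y) (mem_set (f_lc y)).

Lemma XD_corestrK : XD_incl X \o XD_corestr = f.
Proof. by []. Qed.

Lemma XD_corestr_continuous : continuous f -> continuous XD_corestr.
Proof. by move=> cf; apply: continuous_comp_initial; exact: cf. Qed.

Lemma XD_corestr_unique (g : Y -> XD X) : XD_incl X \o g = f -> g = XD_corestr.
Proof.
by move=> gf; apply: funext => y; apply: XD_incl_inj; exact: (congr1 (@^~ y) gf).
Qed.

End Corestriction.

Theorem theorem5p21 :
  (* fullness: every continuous map between T_D-spaces is locally closed *)
  (forall (Y Z : topologicalType) (f : Y -> Z),
      TD_space Y -> TD_space Z -> continuous f -> lc_map f) /\
  (* coreflection: X_D ⊆ X *)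
  (forall X : topologicalType,
     [/\ TD_space (XD X), continuous (XD_incl X), lc_map (XD_incl X) &
      forall (Y : topologicalType), TD_space Y ->
      forall f : Y -> X, continuous f -> lc_map f ->
      exists! g : Y -> XD X,
        [/\ continuous g, lc_map g & XD_incl X \o g = f]]).
Proof.
split; first by move=> Y Z f _ TZ _; apply: lc_map_TD.
move=> X; split.
- exact: XD_TD_space.
- exact: XD_incl_continuous.
- by move=> x _; apply: lc_point_XD_incl.
move=> Y TY f cf lf.
have f_lc y : lc_point (f y) by apply: lf; apply: TY.
exists (XD_corestr f_lc); split.
  split.
  - exact: XD_corestr_continuous.
  - exact: lc_map_TD (@XD_TD_space X).
  - exact: XD_corestrK.
move=> g [_ _ gf]; have -> := XD_corestr_unique f_lc gf; reflexivity.
Qed.
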